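(* Let $A\subseteq B$ be an extension of commutative rings which has a retraction, i.e. there is a ring morphism $f:B\to A$ with $f(a)=a$ for all $a\in A$. Then $\mathfrak{C}(A,B)=0$.
   Context: All rings are commutative with identity. For an extension of rings $A\subseteq B$ and $A$-submodules $L,L'$ of $B$, $LL'$ is the $A$-submodule of finite sums $\sum x_ky_k$ with $x_k\in L,y_k\in L'$. An $A$-submodule $L$ of $B$ is an invertible ideal of $A\subseteq B$ if $LL'=A$ for some $A$-submodule $L'$ of $B$; these form an abelian group $\mathscr{G}(A,B)$ under multiplication, and $\mathfrak{C}(A,B)=\mathscr{G}(A,B)/\{Ax: x\in B^\ast\}$. *)

From HB Require Import structures.
From mathcomp Require Import all_boot all_order all_algebra.
Set Implicit Arguments. Unset Strict Implicit. Unset Printing Implicit Defensive.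
Import GRing.Theory.
Local Open Scope ring_scope.

(* The ring A is represented as a subring S of the commutative ring B
   (so the extension A ⊆ B is S ⊆ B). Subsets of B are Prop-valued predicates. *)

Definition is_subring (B : comPzRingType) (S : B -> Prop) : Prop :=
  [/\ S 0, S 1, (forall x y, S x -> S y -> S (x - y))
    & (forall x y, S x -> S y -> S (x * y))].

Definition is_submod (B : comPzRingType) (S L : B -> Prop) : Prop :=
  [/\ L 0, (forall x y, L x -> L y -> L (x + y))
    & (forall a x, S a -> L x -> L (a * x))].

Definition prodmod (B : comPzRingType) (L L' : B -> Prop) (z : B) : Prop :=
  exists n (x y : 'I_n -> B),
    [/\ (forall k, L (x k)), (forall k, L' (y k)) & z = \sum_(k < n) x k * y k].

Definition invertible_ideal (B : comPzRingType) (S L : B -> Prop) : Prop :=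
  is_submod S L /\
  exists L' : B -> Prop, is_submod S L' /\ (forall z, prodmod L L' z <-> S z).

Definition is_unitB (B : comPzRingType) (x : B) : Prop := exists y, x * y = 1.

Definition principal (B : comPzRingType) (S : B -> Prop) (x z : B) : Prop :=
  exists a, S a /\ z = a * x.

(* C(A,B) = 0 : every invertible ideal equals Ax for some unit x of B *)
Definition class_group_trivial (B : comPzRingType) (S : B -> Prop) : Prop :=
  forall L : B -> Prop, invertible_ideal S L ->
    exists x : B, is_unitB x /\ (forall z, L z <-> principal S x z).

From HB Require Import structures.
From mathcomp Require Import all_boot all_order all_algebra.
Set Implicit Arguments. Unset Strict Implicit. Unset Printing Implicit Defensive.
Local Open Scope ring_scope.
Import GRing.Theory.

(* Let f be the retraction and 1 = \sum_k x_k y_k with x_k in L, y_k in L'.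
   Products a b with a in L, b in L' lie in A, so a b = f(a) f(b).  Hence
   u := \sum_k f(y_k) x_k in L and v := \sum_k f(x_k) y_k satisfy
   z v = f(z) for every z in L; in particular u v = f(u) = f(1) = 1, and
   z = z v u = f(z) u, so L = A u with u a unit of B. *)

Lemma submod_sum (B : comPzRingType) (S L : B -> Prop) n (g : 'I_n -> B) :
  is_submod S L -> (forall k, L (g k)) -> L (\sum_(k < n) g k).
Proof. by case=> L0 LD _ Lg; apply: (big_ind L) => // k _; apply: Lg. Qed.

Lemma prodmod_mul (B : comPzRingType) (L L' : B -> Prop) a b :
  L a -> L' b -> prodmod L L' (a * b).
Proof. by move=> La Lb; exists 1%N, (fun=> a), (fun=> b); rewrite big_ord1. Qed.

Lemma mulr_sum_dual (B : comPzRingType) (f : B -> B) n (x y : 'I_n -> B) z :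
  (forall k, z * y k = f z * f (y k)) ->
  \sum_(k < n) f (x k) * f (y k) = 1 ->
  z * \sum_(k < n) f (x k) * y k = f z.
Proof.
move=> zy sum1; rewrite mulr_sumr.
under eq_bigr => k _ do rewrite mulrCA zy mulrCA.
by rewrite -mulr_sumr sum1 mulr1.
Qed.

Section Retraction.

Variables (B : comPzRingType) (S : B -> Prop) (f : {rmorphism B -> B}).
Hypotheses (fS : forall b, S (f b)) (fid : forall a, S a -> f a = a).

Lemma retractK b : f (f b) = f b.
Proof. exact/fid/fS. Qed.

Variables L L' : B -> Prop.
Hypothesis subL : is_submod S L.
Hypothesis mul_in : forall a b, L a -> L' b -> S (a * b).

Lemma retract_mul a b : L a -> L' b -> a * b = f a * f b.
Proof. by move=> La Lb; rewrite -rmorphM fid //; apply: mul_in. Qed.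

Variables (n : nat) (x y : 'I_n -> B).
Hypotheses (Lx : forall k, L (x k)) (L'y : forall k, L' (y k)).
Hypothesis sum_xy : \sum_(k < n) x k * y k = 1.

Let u := \sum_(k < n) f (y k) * x k.
Let v := \sum_(k < n) f (x k) * y k.

Lemma retract_sum_xy : \sum_(k < n) f (x k) * f (y k) = 1.
Proof.
by rewrite -(rmorph1 f) -sum_xy rmorph_sum; apply: eq_bigr => k _; rewrite rmorphM.
Qed.

Lemma generator_in : L u.
Proof. by case: (subL) => _ _ scaleL; apply: submod_sum subL _ => k; apply: scaleL. Qed.

Lemma mul_dual_generator z : L z -> z * v = f z.
Proof.
move=> Lz; apply: mulr_sum_dual retract_sum_xy => k.
exact: retract_mul.
Qed.

Lemma generator_unit : u * v = 1.
Proof.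
rewrite mul_dual_generator; last exact: generator_in.
rewrite /u rmorph_sum -[RHS]retract_sum_xy.
by apply: eq_bigr => k _; rewrite rmorphM retractK mulrC.
Qed.

Lemma submod_eq_principal z : L z <-> principal S u z.
Proof.
split=> [Lz | [a [Sa ->]]].
- exists (f z); split => //.
  by rewrite -mul_dual_generator // -mulrA [v * u]mulrC generator_unit mulr1.
- by case: subL => _ _ scaleL; apply: scaleL (generator_in).
Qed.

Lemma submod_principal_unit :
  exists u, is_unitB u /\ (forall z, L z <-> principal S u z).
Proof. by exists u; split; [exists v; apply: generator_unit | apply: submod_eq_principal]. Qed.

End Retraction.

Theorem theorem5p10 (B : comPzRingType) (S : B -> Prop) :
  is_subring S ->
  (exists f : {rmorphism B -> B},
      (forall b, S (f b)) /\ (forall a, S a -> f a = a)) ->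
  class_group_trivial S.
Proof.
move=> [_ S1 _ _] [f [fS fid]] L [subL [L' [_ LL'_eq]]].
have mul_in a b : L a -> L' b -> S (a * b).
  by move=> La Lb; apply/LL'_eq/prodmod_mul.
have [n [x [y [Lx L'y /esym sum_xy]]]] : prodmod L L' 1 by apply/LL'_eq.
exact: (submod_principal_unit fS fid subL mul_in Lx L'y).
Qed.
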